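(* If $p$ is a prime number, then $J_{p-1}=2$, i.e. the only vectors $(\delta_0,\ldots,\delta_{p-1})\in\{-1,1\}^{p}$ with $\sum_{i=0}^{p-1}\delta_i\binom{p-1}{i}=0$ are $\delta_i=(-1)^i$ for all $i$ and $\delta_i=-(-1)^i$ for all $i$.
   Context: $J_n$ denotes the number of vectors $(\delta_0,\ldots,\delta_n)\in\{-1,1\}^{n+1}$ with $\sum_{i=0}^n\delta_i\binom{n}{i}=0$. *)

From mathcomp Require Import all_boot all_order all_algebra.
Set Implicit Arguments. Unset Strict Implicit. Unset Printing Implicit Defensive.
Import GRing.Theory Num.Theory.
Local Open Scope ring_scope.

(* A sign vector (delta_0,...,delta_n) in {-1,1}^(n+1) is encoded by
   b : {ffun 'I_(n.+1) -> bool}, with delta_i = (-1)^(b i) (true <-> -1). *)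
Definition sgn_of (b : bool) : int := (-1) ^+ b.

Definition Jset (n : nat) : {set {ffun 'I_n.+1 -> bool}} :=
  [set b : {ffun 'I_n.+1 -> bool} | \sum_(i < n.+1) sgn_of (b i) * ('C(n, i))%:Z == 0].

Definition J (n : nat) : nat := #|Jset n|.

From mathcomp Require Import all_boot all_order all_algebra.
From mathcomp Require Import zify.
Set Implicit Arguments. Unset Strict Implicit. Unset Printing Implicit Defensive.
Import GRing.Theory Num.Theory.
Local Open Scope ring_scope.

(* Since C(p-1, i) = (-1)^i mod p, the signs e_i = delta_i (-1)^i satisfy
   sum_i e_i = sum_i delta_i C(p-1, i) = 0 mod p.  This sum of p signs is
   nonzero (for odd p it is odd; p = 2 is checked directly), and a nonzero
   multiple of p in [-p, p] is +-p, so all e_i are equal. *)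

Lemma sum_signr (R : pzRingType) (I : finType) (c : pred I) :
  \sum_(i : I) (-1) ^+ c i = #|[predC c]|%:R - #|c|%:R :> R.
Proof.
rewrite (bigID c) /= addrC; congr (_ + _).
  by rewrite (eq_bigr (fun=> 1)) => [|i /negbTE ->]; rewrite ?sumr_const.
by rewrite (eq_bigr (fun=> -1)) => [|i ->]; rewrite ?sumr_const ?mulNrn.
Qed.

Lemma sum_signr_neq0 (I : finType) (c : pred I) :
  odd #|I| -> \sum_(i : I) (-1) ^+ c i != 0 :> int.
Proof.
rewrite sum_signr -(cardC c) subr_eq0 eqr_nat.
by apply: contraTN => /eqP ->; rewrite addnn odd_double.
Qed.

Lemma signr_const_of_dvdz (I : finType) (c : pred I) :
  (#|I| %| \sum_(i : I) (-1) ^+ c i)%Z -> \sum_(i : I) (-1) ^+ c i != 0 :> int ->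
  (forall i, ~~ c i) \/ (forall i, c i).
Proof.
rewrite sum_signr !natz dvdzE => /dvdn_leq le_card_s s_neq0.
have card_c := cardC c.
have [/card0_eq c0|/card0_eq c1] : #|c| = 0%N \/ #|[predC c]| = 0%N by lia.
  by left=> i; have := c0 i; rewrite !inE => /negbT.
by right=> i; have := c1 i; rewrite !inE => /negbFE.
Qed.

Lemma alt_sum_bin (R : comPzRingType) n :
  (0 < n)%N -> \sum_(i < n.+1) (-1) ^+ i *+ 'C(n, i) = 0 :> R.
Proof.
move=> n_gt0; transitivity ((1 - 1 : R) ^+ n).
  by rewrite exprDn; apply: eq_bigr => i _; rewrite expr1n mul1r.
by rewrite subrr expr0n eqn0Ngt n_gt0.
Qed.

Lemma dvdz_bin_pred_prime p i : prime p -> (i < p)%N ->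
  (p %| 'C(p.-1, i)%:Z - (-1) ^+ i)%Z.
Proof.
case: p => // n pr_p /=; elim: i => [|i IHi] lt_i_p; first by rewrite bin0 subrr.
have -> : 'C(n, i.+1)%:Z - (-1) ^+ i.+1 =
    'C(n.+1, i.+1)%:Z - ('C(n, i)%:Z - (-1) ^+ i).
  by rewrite binS PoszD exprS; lia.
by rewrite rpredB ?IHi ?(ltnW lt_i_p) // dvdzE /= prime_dvd_bin.
Qed.

Lemma dvdz_sum_signr_bin n (b : 'I_n.+1 -> bool) : prime n.+1 ->
  \sum_(i < n.+1) (-1) ^+ b i * 'C(n, i)%:Z = 0 ->
  (n.+1 %| \sum_(i < n.+1) (-1) ^+ (b i (+) odd i))%Z.
Proof.
move=> pr_p sum_eq0.
have -> : \sum_(i < n.+1) (-1) ^+ (b i (+) odd i) =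
    \sum_(i < n.+1) (-1) ^+ b i * 'C(n, i)%:Z
    - \sum_(i < n.+1) (-1) ^+ b i * ('C(n, i)%:Z - (-1) ^+ i).
  rewrite -sumrB; apply: eq_bigr => i _.
  by rewrite signr_addb signr_odd mulrBr opprB addrC subrK.
rewrite sum_eq0 sub0r rpredN; apply: rpred_sum => i _.
by apply: dvdz_mull; exact: dvdz_bin_pred_prime pr_p (ltn_ord i).
Qed.

(* For p = 2 a vanishing sum of two signs is divisible by p, so the
   congruence alone does not suffice. *)
Lemma sum_signr_bin1_neq0 (b : 'I_2 -> bool) :
  \sum_(i < 2) (-1) ^+ b i * 'C(1, i)%:Z = 0 ->
  \sum_(i < 2) (-1) ^+ (b i (+) odd i) != 0 :> int.
Proof. by rewrite !big_ord_recl !big_ord0; case: (b _); case: (b _). Qed.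

Lemma sum_signr_bin_eq0 n (b : 'I_n.+1 -> bool) : prime n.+1 ->
  \sum_(i < n.+1) (-1) ^+ b i * 'C(n, i)%:Z = 0 ->
  (forall i, b i = odd i) \/ (forall i, b i = ~~ odd i).
Proof.
move=> pr_p sum_eq0.
have s_neq0 : \sum_(i < n.+1) (-1) ^+ (b i (+) odd i) != 0 :> int.
  have [[n1]|p_odd] := even_prime pr_p; first by subst n; exact: sum_signr_bin1_neq0.
  by apply: sum_signr_neq0; rewrite card_ord.
have dvd_s : (#|'I_n.+1| %| \sum_(i < n.+1) (-1) ^+ (b i (+) odd i))%Z.
  by rewrite card_ord dvdz_sum_signr_bin.
have [c0|c1] := signr_const_of_dvdz dvd_s s_neq0; [left|right] => i.
  by have := c0 i; case: (b i); case: (odd i).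
by have := c1 i; case: (b i); case: (odd i).
Qed.

Lemma Jset_prime n : prime n.+1 ->
  Jset n = [set [ffun i : 'I_n.+1 => odd i]; [ffun i : 'I_n.+1 => ~~ odd i]].
Proof.
move=> pr_p; have n_gt0 : (0 < n)%N by have := prime_gt1 pr_p.
have alt_sum : \sum_(i < n.+1) (-1) ^+ odd i * 'C(n, i)%:Z = 0.
  rewrite -[RHS](alt_sum_bin _ n_gt0); apply: eq_bigr => i _.
  by rewrite signr_odd -natz mulr_natr.
apply/setP => b; rewrite !inE; apply/idP/idP.
  move/eqP/(sum_signr_bin_eq0 pr_p) => [] b_eq; apply/orP; [left|right];
    by apply/eqP/ffunP => i; rewrite ffunE b_eq.
case/orP => /eqP ->; apply/eqP.
  by rewrite -[RHS]alt_sum; apply: eq_bigr => i _; rewrite ffunE.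
rewrite -[RHS]oppr0 -[in RHS]alt_sum -sumrN; apply: eq_bigr => i _.
by rewrite ffunE /sgn_of signrN mulNr.
Qed.

Lemma pm1_signr (x : int) : x = 1 \/ x = -1 -> x = (-1) ^+ (x == -1).
Proof. by case=> ->. Qed.

Theorem theorem6 (p : nat) (hp : prime p) :
  J p.-1 = 2%N /\
  (forall delta : 'I_p -> int,
     (forall i, delta i = 1 \/ delta i = -1) ->
     \sum_(i < p) delta i * ('C(p.-1, i))%:Z = 0 ->
     (forall i : 'I_p, delta i = (-1) ^+ i) \/
     (forall i : 'I_p, delta i = - (-1) ^+ i)).
Proof.
case: p hp => [//|n] pr_p /=; split.
  rewrite /J Jset_prime // cards2.
  by case: eqP => // /ffunP/(_ ord0); rewrite !ffunE.
move=> delta delta_pm1 sum_eq0.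
have delta_signr i : delta i = (-1) ^+ (delta i == -1) := pm1_signr (delta_pm1 i).
have sum_b : \sum_(i < n.+1) (-1) ^+ (delta i == -1) * 'C(n, i)%:Z = 0.
  by rewrite -[RHS]sum_eq0; apply: eq_bigr => i _; rewrite -delta_signr.
have [b_eq|b_eq] := sum_signr_bin_eq0 pr_p sum_b; [left|right] => i.
  by rewrite delta_signr b_eq signr_odd.
by rewrite delta_signr b_eq signrN signr_odd.
Qed.
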